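(* Let $L=(\phi,f,\eta):\mathbb{TD}_n\to\mathbb{TB}^{F_2}_{\mathbb{R},n}$ be the crossed intertwiner with $\phi(a\oplus\hat a)=a$, $f(m\oplus\hat m,s)=(\tau_{s,\hat m},m)$ where $\tau_{s,\hat m}(c)=s+\hat mc$, and $\eta(a\oplus\hat a,a'\oplus\hat a')=\hat aa'$ (a constant function). For every $B\in\mathfrak{so}(n,\mathbb{Z})$ let $F_B=(\mathrm{id}_{\mathbb{R}^n},f_B,\eta_B)$ act on $\mathbb{TB}^{F_2}_{\mathbb{R},n}$ with $f_B(\tau,m)=(\tau-\langle m|B|,m)$ and $\eta_B(a,a')=\langle a'|B|a\rangle_{low}$ (constant function), and let $F_{e^B}=(\phi_{e^B},f_{e^B},\eta_{e^B})$ act on $\mathbb{TD}_n$ with $\phi_{e^B}(a\oplus\hat a)=a\oplus(Ba+\hat a)$, $f_{e^B}(m\oplus\hat m,s)=(m\oplus(Bm+\hat m),s)$ and $\eta_{e^B}(a\oplus\hat a,b\oplus\hat b)=\langle a|B|b\rangle_{low}$. Then $L$ is strictly $\mathfrak{so}(n,\mathbb{Z})$-equivariant: $F_B\circ L=L\circ F_{e^B}$ for all $B\in\mathfrak{so}(n,\mathbb{Z})$, with composition of crossed intertwiners as defined below.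
   Context: $U(1)=\mathbb{R}/\mathbb{Z}$, $\mathbb{T}^n=\mathbb{R}^n/\mathbb{Z}^n$ additively; $vw=\sum v_iw_i$. For $B\in\mathfrak{so}(n,\mathbb{Z})$ (skew-symmetric integer matrices), $\langle v|B|w\rangle=\sum B_{ij}v_iw_j$, $B_{low}$ the strictly lower triangular matrix with $B=B_{low}-B_{low}^T$, $\langle v|B|w\rangle_{low}=\langle v|B_{low}|w\rangle$, and $\langle m|B|$ for $m\in\mathbb{Z}^n$ is the function $c\mapsto\langle m|B|c\rangle$ on $\mathbb{T}^n$. For $\tau\in C^\infty(\mathbb{T}^n,U(1))$, $a.\tau(c)=\tau(c-a)$. A crossed module $(G,H,t,\alpha)$: Lie groups $G,H$, homomorphism $t:H\to G$, smooth action $\alpha$ of $G$ on $H$ by automorphisms with $\alpha(t(h),h')=hh'h^{-1}$, $t(\alpha(g,h))=gt(h)g^{-1}$; $U:=\ker t$. A crossed intertwiner $(\phi,f,\eta):(G,H,t,\alpha)\to(G',H',t',\alpha')$ consists of homomorphisms $\phi:G\to G'$, $f:H\to H'$ and a smooth map $\eta:G\times G\to U'$ with (CI1) $\phi(t(h))=t'(f(h))$; (CI2) $\eta(t(h),t(h'))=1$; (CI3) $\eta(g,t(h)g^{-1})f(\alpha(g,h))=\alpha'(\phi(g),\eta(t(h)g^{-1},g))\,\alpha'(\phi(g),f(h))$; (CI4) $\eta(g,g')\eta(gg',g'')=\alpha'(\phi(g),\eta(g',g''))\eta(g,g'g'')$. Composition: $(\phi_2,f_2,\eta_2)\circ(\phi_1,f_1,\eta_1)=(\phi_2\circ\phi_1,f_2\circ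 f_1,(\eta_2\circ(\phi_1\times\phi_1))\cdot(f_2\circ\eta_1))$. $\mathbb{TD}_n$: $G=\mathbb{R}^{2n}=\mathbb{R}^n\oplus\mathbb{R}^n$ (elements $a\oplus\hat a$), $H=(\mathbb{Z}^n\oplus\mathbb{Z}^n)\times U(1)$ (elements $(m\oplus\hat m,s)$), $t(m\oplus\hat m,s)=m\oplus\hat m$, $\alpha(a\oplus\hat a,(m\oplus\hat m,s))=(m\oplus\hat m,s-\hat am)$. $\mathbb{TB}^{F_2}_{\mathbb{R},n}$: $G=\mathbb{R}^n$, $H=C^\infty(\mathbb{T}^n,U(1))\times\mathbb{Z}^n$ (pointwise group structure on the first factor), $t(\tau,m)=m$, $\alpha(a,(\tau,m))=(a.\tau,m)$. *)

From mathcomp Require Import all_boot.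
From Stdlib Require Import Reals ZArith.

Set Implicit Arguments.
Unset Strict Implicit.

(* ---------- U(1) = R/Z, represented by canonical representatives in [0,1) *)
Definition U1 : Type := {x : R | (0 <= x < 1)%R}.

Lemma frac_part_bounds (x : R) : (0 <= frac_part x < 1)%R.
Proof. destruct (base_fp x) as [H1 H2]. split; [apply Rge_le; exact H1 | exact H2]. Qed.

Definition u1 (x : R) : U1 := exist _ (frac_part x) (frac_part_bounds x).
Definition u1val (s : U1) : R := proj1_sig s.
Definition u1add (s t : U1) : U1 := u1 (u1val s + u1val t)%R.
Definition u1opp (s : U1) : U1 := u1 (- u1val s)%R.

Definition Vn (n : nat) : Type := 'I_n -> R.
Definition Zn (n : nat) : Type := 'I_n -> Z.
Definition Tn (n : nat) : Type := 'I_n -> U1.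

Definition rsum (n : nat) (F : 'I_n -> R) : R := \big[Rplus/0%R]_(i < n) F i.
Definition zsum (n : nat) (F : 'I_n -> Z) : Z := \big[Z.add/0%Z]_(i < n) F i.

Definition zvec (n : nat) (m : Zn n) : Vn n := fun i => IZR (m i).
Definition zn_add (n : nat) (m m' : Zn n) : Zn n := fun i => (m i + m' i)%Z.
Definition zn_zero (n : nat) : Zn n := fun _ => 0%Z.

Definition dot (n : nat) (v w : Vn n) : R := rsum (fun i => v i * w i)%R.

Definition ZMat (n : nat) : Type := 'I_n -> 'I_n -> Z.
Definition skew (n : nat) (B : ZMat n) : Prop := forall i j, B i j = (- B j i)%Z.

Definition braket (n : nat) (B : ZMat n) (v w : Vn n) : R :=
  rsum (fun i => rsum (fun j => IZR (B i j) * v i * w j))%R.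
(* strictly lower triangular part: B = B_low - B_low^T for skew B *)
Definition Blow (n : nat) (B : ZMat n) : ZMat n :=
  fun i j => if ltn j i then B i j else 0%Z.
Definition braket_low (n : nat) (B : ZMat n) (v w : Vn n) : R := braket (Blow B) v w.

Definition matvecR (n : nat) (B : ZMat n) (a : Vn n) : Vn n :=
  fun i => rsum (fun j => IZR (B i j) * a j)%R.
Definition matvecZ (n : nat) (B : ZMat n) (m : Zn n) : Zn n :=
  fun i => zsum (fun j => (B i j * m j)%Z).

(* functions T^n -> U(1) built from integer data (well defined mod Z) *)
Definition pairT (n : nat) (m : Zn n) (c : Tn n) : U1 :=
  u1 (dot (zvec m) (fun i => u1val (c i))).
Definition braT (n : nat) (B : ZMat n) (m : Zn n) (c : Tn n) : U1 :=
  u1 (braket B (zvec m) (fun i => u1val (c i))).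
Definition tau (n : nat) (s : U1) (mh : Zn n) : Tn n -> U1 :=
  fun c => u1add s (pairT mh c).

Definition TD_G (n : nat) : Type := (Vn n * Vn n)%type.
Definition TD_H (n : nat) : Type := ((Zn n * Zn n) * U1)%type.
Definition TB_G (n : nat) : Type := Vn n.
Definition TB_H (n : nat) : Type := ((Tn n -> U1) * Zn n)%type.
Definition TB_mul (n : nat) (h h' : TB_H n) : TB_H n :=
  (fun c => u1add (h.1 c) (h'.1 c), zn_add h.2 h'.2).

(* eta takes values in U' = ker t', viewed inside H' *)
Record CI (G H G' H' : Type) := MkCI {
  ci_phi : G -> G';
  ci_f : H -> H';
  ci_eta : G -> G -> H' }.

Definition ci_comp (G H G' H' G'' H'' : Type) (mul'' : H'' -> H'' -> H'')
  (c2 : CI G' H' G'' H'') (c1 : CI G H G' H') : CI G H G'' H'' :=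
  MkCI (fun g => ci_phi c2 (ci_phi c1 g))
       (fun h => ci_f c2 (ci_f c1 h))
       (fun g g' => mul'' (ci_eta c2 (ci_phi c1 g) (ci_phi c1 g'))
                          (ci_f c2 (ci_eta c1 g g'))).

Definition L_CI (n : nat) : CI (TD_G n) (TD_H n) (TB_G n) (TB_H n) :=
  MkCI (fun g : TD_G n => g.1)
       (fun h : TD_H n => (tau h.2 h.1.2, h.1.1))
       (fun g g' : TD_G n => ((fun _ => u1 (dot g.2 g'.1)), @zn_zero n)).

Definition FB_CI (n : nat) (B : ZMat n) : CI (TB_G n) (TB_H n) (TB_G n) (TB_H n) :=
  MkCI (fun a : TB_G n => a)
       (fun h : TB_H n => ((fun c => u1add (h.1 c) (u1opp (braT B h.2 c))), h.2))
       (fun a a' : TB_G n => ((fun _ => u1 (braket_low B a' a)), @zn_zero n)).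

Definition FeB_CI (n : nat) (B : ZMat n) : CI (TD_G n) (TD_H n) (TD_G n) (TD_H n) :=
  MkCI (fun g : TD_G n => (g.1, fun i => (matvecR B g.1 i + g.2 i)%R))
       (fun h : TD_H n => ((h.1.1, zn_add (matvecZ B h.1.1) h.1.2), h.2))
       (fun g g' : TD_G n => ((@zn_zero n, @zn_zero n), u1 (braket_low B g.1 g'.1))).

(** Since the projection [u1 : R -> U(1)]
    is additive, every component becomes [u1] of an explicit real expression,
    and the two expressions agree by bilinear algebra: [(B m) c = - <m|B|c>]
    for skew [B], and [<a'|B|a> = <a'|B|a>_low - <a|B|a'>_low] because
    [B = B_low - B_low^T]. *)

From HB Require Import structures.
From mathcomp Require Import all_boot.
From Stdlib Require Import Reals ZArith Lra Lia ProofIrrelevance FunctionalExtensionality.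

Set Implicit Arguments.
Unset Strict Implicit.

Lemma RplusA : associative Rplus. Proof. by move=> a b c; rewrite Rplus_assoc. Qed.
HB.instance Definition _ := Monoid.isComLaw.Build R 0%R Rplus RplusA Rplus_comm Rplus_0_l.

Local Open Scope R_scope.

Lemma frac_part_eqZ (x y : R) (k : Z) : x - y = IZR k -> frac_part x = frac_part y.
Proof.
move=> Exy; have [fx0 fx1] := frac_part_bounds x; have [fy0 fy1] := frac_part_bounds y.
have E : frac_part x - frac_part y = IZR (k - Int_part x + Int_part y).
  by rewrite /frac_part plus_IZR minus_IZR; lra.
have k0 : (k - Int_part x + Int_part y = 0)%Z.
  have lo : (-1 < k - Int_part x + Int_part y)%Z by apply: lt_IZR; rewrite -E; lra.
  have hi : (k - Int_part x + Int_part y < 1)%Z by apply: lt_IZR; rewrite -E; lra.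
  lia.
by move: E; rewrite k0 /=; lra.
Qed.

Lemma u1_eqZ (x y : R) (k : Z) : x - y = IZR k -> u1 x = u1 y.
Proof. by move=> /frac_part_eqZ Exy; apply: subset_eq_compat. Qed.

Lemma u1_u1val (s : U1) : u1 (u1val s) = s.
Proof.
case: s => r [r0 r1]; apply: subset_eq_compat.
have up1 : up r = 1%Z by symmetry; apply: tech_up; rewrite /=; lra.
by rewrite /frac_part /Int_part up1 /=; lra.
Qed.

Lemma u1addE (x y : R) : u1add (u1 x) (u1 y) = u1 (x + y).
Proof.
apply: (@u1_eqZ _ _ (- Int_part x - Int_part y)%Z).
by rewrite /u1val /= /frac_part minus_IZR opp_IZR; lra.
Qed.

Lemma u1oppE (x : R) : u1opp (u1 x) = u1 (- x).
Proof. by apply: (@u1_eqZ _ _ (Int_part x)); rewrite /u1val /= /frac_part; lra. Qed.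

Lemma rsum_add (n : nat) (F G : 'I_n -> R) : rsum (fun i => F i + G i) = rsum F + rsum G.
Proof. exact: big_split. Qed.

Lemma rsum_sub (n : nat) (F G : 'I_n -> R) : rsum (fun i => F i - G i) = rsum F - rsum G.
Proof.
rewrite /rsum; apply: (big_rec3 (fun a b c => a = b - c)); first lra.
by move=> i a b c _ ->; lra.
Qed.

Lemma rsum_mulr (n : nat) (F : 'I_n -> R) (c : R) : rsum (fun i => F i * c) = rsum F * c.
Proof.
rewrite /rsum; apply: (big_rec2 (fun a b => a = b * c)); first lra.
by move=> i a b _ ->; lra.
Qed.

Lemma rsum_ext (n : nat) (F G : 'I_n -> R) : (forall i, F i = G i) -> rsum F = rsum G.
Proof. by move=> FG; apply: eq_bigr => i _. Qed.

Lemma rsum_swap (n : nat) (F : 'I_n -> 'I_n -> R) :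
  rsum (fun i => rsum (fun j => F i j)) = rsum (fun j => rsum (fun i => F i j)).
Proof. exact: exchange_big. Qed.

Lemma IZR_zsum (n : nat) (F : 'I_n -> Z) : IZR (zsum F) = rsum (fun i => IZR (F i)).
Proof. exact: (big_morph IZR plus_IZR). Qed.

Lemma zvec_add (n : nat) (m m' : Zn n) : zvec (zn_add m m') = fun i => zvec m i + zvec m' i.
Proof. by apply: functional_extensionality => i; rewrite /zvec /zn_add plus_IZR. Qed.

Lemma zvec_matvecZ (n : nat) (B : ZMat n) (m : Zn n) : zvec (matvecZ B m) = matvecR B (zvec m).
Proof.
apply: functional_extensionality => i; rewrite /zvec /matvecZ /matvecR IZR_zsum.
by apply: rsum_ext => j; rewrite mult_IZR.
Qed.

Lemma dot_addl (n : nat) (u v w : Vn n) : dot (fun i => u i + v i) w = dot u w + dot v w.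
Proof. by rewrite /dot -rsum_add; apply: rsum_ext => i; ring. Qed.

Lemma dot_zvec0 (n : nat) (w : Vn n) : dot (zvec (@zn_zero n)) w = 0.
Proof. by rewrite /dot /rsum big1 // => i _; rewrite /zvec /zn_zero; ring. Qed.

Lemma braket_zvec0 (n : nat) (B : ZMat n) (w : Vn n) : braket B (zvec (@zn_zero n)) w = 0.
Proof.
rewrite /braket /rsum big1 // => i _; rewrite big1 // => j _.
by rewrite /zvec /zn_zero; ring.
Qed.

Lemma dot_matvecR (n : nat) (B : ZMat n) (a w : Vn n) : dot (matvecR B a) w = braket B w a.
Proof.
rewrite /dot /braket /matvecR; apply: rsum_ext => i.
by rewrite -rsum_mulr; apply: rsum_ext => j; ring.
Qed.

Section SkewMatrix.

Variables (n : nat) (B : ZMat n).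
Hypothesis skewB : skew B.

Lemma skew_Blow (i j : 'I_n) : B i j = (Blow B i j - Blow B j i)%Z.
Proof.
rewrite /Blow /ltn /=; case: (ltngtP j i) => [_|_|/val_inj ji]; first lia.
- by rewrite skewB; lia.
- by subst j; have := skewB i i; lia.
Qed.

Lemma braket_low_skew (v w : Vn n) : braket B v w = braket_low B v w - braket_low B w v.
Proof.
rewrite /braket_low /braket [X in _ - X]rsum_swap -rsum_sub; apply: rsum_ext => i.
by rewrite -rsum_sub; apply: rsum_ext => j; rewrite skew_Blow minus_IZR; ring.
Qed.

Lemma braket_skew (v w : Vn n) : braket B v w = - braket B w v.
Proof. by rewrite !braket_low_skew; ring. Qed.

End SkewMatrix.

Theorem mainTheorem8 (n : nat) (B : ZMat n) (hB : skew B) :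
  ci_comp (@TB_mul n) (FB_CI B) (L_CI n) = ci_comp (@TB_mul n) (L_CI n) (FeB_CI B).
Proof.
rewrite /ci_comp /FB_CI /L_CI /FeB_CI /TB_mul /=; congr MkCI.
- apply: functional_extensionality => -[[m mh] s] /=.
  congr pair; apply: functional_extensionality => c.
  rewrite /tau /pairT /braT -[s]u1_u1val u1oppE !u1addE; congr u1.
  rewrite zvec_add dot_addl zvec_matvecZ dot_matvecR (braket_skew hB); ring.
- apply: functional_extensionality => -[a ah]; apply: functional_extensionality => -[a' ah'] /=.
  congr pair; apply: functional_extensionality => c.
  rewrite /tau /pairT /braT u1oppE !u1addE; congr u1.
  rewrite braket_zvec0 dot_zvec0 dot_addl dot_matvecR (braket_low_skew hB); ring.
Qed.
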